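(* Let $c\ge 2$ be an integer and $\lambda,\mu,\alpha>0$ with $\lambda<c\mu$. Let $(\pi_{i,j})_{(i,j)\in\mathcal S}$ be the stationary distribution of the continuous-time Markov chain on $\mathcal S=\{(i,j):0\le i\le c,\ j\ge i\}$ whose only transitions are: $(i,j)\to(i,j+1)$ at rate $\lambda$; $(i,j)\to(i+1,j)$ at rate $\min(j-i,c-i)\alpha$ for $i<c$, $j>i$; $(i,j)\to(i,j-1)$ at rate $i\mu$ for $i\ge1$, $j>i$; $(i,i)\to(i-1,i-1)$ at rate $i\mu$ for $i\ge 1$. Let $f_1(z)=(\lambda+\mu+(c-1)\alpha)z-\lambda z^2-\mu$, with roots $z_1=\frac{\lambda+\mu+(c-1)\alpha-\sqrt{(\lambda+\mu+(c-1)\alpha)^2-4\lambda\mu}}{2\lambda}$ and $\hat z_1=\frac{\lambda+\mu+(c-1)\alpha+\sqrt{(\lambda+\mu+(c-1)\alpha)^2-4\lambda\mu}}{2\lambda}$ (so $0<z_1<1<\hat z_1$), and let $\hat z_0=(\lambda+c\alpha)/\lambda$. Define $\widehat\Pi_0(z)=\sum_{j\ge c}\pi_{0,j}z^{j}$ and $\widehat\Pi_1(z)=\sum_{j\ge c}\pi_{1,j}z^{j-1}$. Define $a^{(1)}_c=\frac{c\alpha\widehat\Pi_0(z_1)}{\mu z_1^{c-1}}$, $b^{(1)}_c=\frac{\lambda z_1}{\mu}$, and for $j=c-1,c-2,\dots,1$, $$a^{(1)}_j=\frac{j\alpha\pi_{0,j}+\mu a^{(1)}_{j+1}}{\lambda+\mu+(j-1)\alpha-\mu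 b^{(1)}_{j+1}},\qquad b^{(1)}_j=\frac{\lambda}{\lambda+\mu+(j-1)\alpha-\mu b^{(1)}_{j+1}}.$$ Then: (i) $\pi_{1,j}=a^{(1)}_j+b^{(1)}_j\pi_{1,j-1}$ for $2\le j\le c$; (ii) $a^{(1)}_j>0$ and $0<b^{(1)}_j<\lambda/\mu$ for $j=1,\dots,c$; (iii) if $\hat z_0\neq\hat z_1$, then for all complex $z$ with $|z|\le 1$, $$\widehat\Pi_1(z)=z^{c-1}\left(\frac{A_{1,0}}{\hat z_0-z}+\frac{A_{1,1}}{\hat z_1-z}\right),\quad A_{1,0}=\frac{c\alpha\,\pi_{0,c-1}\hat z_0}{f_1(\hat z_0)},\quad A_{1,1}=\pi_{1,c-1}-A_{1,0}.$$
   Context: The chain models an M/M/$c$ queue with setup times under the ON-OFF policy: $i$ is the number of busy servers, $j$ the number of jobs in the system; arrivals are Poisson($\lambda$), services exp($\mu$), setups exp($\alpha$), and $\min(j-i,c-i)$ servers are in setup in state $(i,j)$. The condition $\lambda<c\mu$ guarantees a unique stationary distribution. *)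

From Stdlib Require Import Reals Arith Bool List.
Import ListNotations.
From Coquelicot Require Import Coquelicot.
Open Scope R_scope.

Definition inS (c : nat) (s : nat * nat) : bool :=
  Nat.leb (fst s) c && Nat.leb (fst s) (snd s).

Definition rate (c : nat) (lam mu alpha : R) (s t : nat * nat) : R :=
  let (i, j) := s in
  let (i', j') := t in
  if inS c s && inS c t then
      (if Nat.eqb i' i && Nat.eqb j' (j + 1) then lam else 0)
    + (if Nat.eqb i' (i + 1) && Nat.eqb j' j && Nat.ltb i c && Nat.ltb i j
       then INR (Nat.min (j - i) (c - i)) * alpha else 0)
    + (if Nat.eqb i' i && Nat.eqb j (j' + 1) && Nat.leb 1 i && Nat.ltb i j
       then INR i * mu else 0)
    + (if Nat.eqb i j && Nat.eqb i' j' && Nat.eqb i (i' + 1)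
       then INR i * mu else 0)
  else 0.

(** Every transition out of (i,j) goes to one of these states ... *)
Definition out_cands (s : nat * nat) : list (nat * nat) :=
  let (i, j) := s in [(i, j + 1); (i + 1, j); (i, j - 1); (i - 1, j - 1)]%nat.
(** ... and every transition into (i,j) comes from one of these states. *)
Definition in_cands (s : nat * nat) : list (nat * nat) :=
  let (i, j) := s in [(i, j - 1); (i - 1, j); (i, j + 1); (i + 1, j + 1)]%nat.

Definition sumR (l : list R) : R := fold_right Rplus 0 l.

Definition stationary (c : nat) (lam mu alpha : R) (pi : nat * nat -> R) : Prop :=
  (forall s, inS c s = true -> 0 <= pi s) /\
  (forall i, (i <= c)%nat -> ex_series (fun k => pi (i, i + k)%nat)) /\
  sum_n (fun i => Series (fun k => pi (i, i + k)%nat)) c = 1 /\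
  (forall s, inS c s = true ->
     pi s * sumR (map (rate c lam mu alpha s) (out_cands s))
     = sumR (map (fun t => pi t * rate c lam mu alpha t s) (in_cands s))).

Section Quantities.
Variables (c : nat) (lam mu alpha : R) (pi : nat * nat -> R).

Definition Bq : R := lam + mu + (INR c - 1) * alpha.
Definition z1 : R := (Bq - sqrt (Bq ^ 2 - 4 * lam * mu)) / (2 * lam).
Definition zh1 : R := (Bq + sqrt (Bq ^ 2 - 4 * lam * mu)) / (2 * lam).
Definition zh0 : R := (lam + INR c * alpha) / lam.
Definition f1 (z : R) : R := Bq * z - lam * z ^ 2 - mu.

Definition Pi0hat (z : R) : R := Series (fun k => pi (0, c + k)%nat * z ^ (c + k)).

(** (a^{(1)}_{c-k}, b^{(1)}_{c-k}), computed by backward recursion from j = c. *)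
Fixpoint ab (k : nat) : R * R :=
  match k with
  | O => (INR c * alpha * Pi0hat z1 / (mu * z1 ^ (c - 1)), lam * z1 / mu)
  | S k' =>
      let (a', b') := ab k' in
      let j := (c - k)%nat in
      let d := lam + mu + (INR j - 1) * alpha - mu * b' in
      ((INR j * alpha * pi (0%nat, j) + mu * a') / d, lam / d)
  end.

Definition a1 (j : nat) : R := fst (ab (c - j)).
Definition b1 (j : nat) : R := snd (ab (c - j)).

Definition A10 : R := INR c * alpha * pi (0, c - 1)%nat * zh0 / f1 zh0.
Definition A11 : R := pi (1, c - 1)%nat - A10.
End Quantities.

From Stdlib Require Import Reals Lra Lia.
From Coquelicot Require Import Coquelicot.
Open Scope R_scope.

(* Level 0 can only be left upwards, so its balance equations make [pi (0, j)]
   geometric with ratio [/ zh0] from [j = c - 1] on.  For a root [z] of [f1],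
   the level-1 balance equations beyond [c] telescope in the flux
   [mu z^(j-1) pi (1, j) - lam z^j pi (1, j - 1)], which changes only by the
   inflow from level 0; for [z = z1 < 1] the flux vanishes at infinity, and this
   gives the boundary relation at [j = c] that starts the backward recursion (i).
   Each denominator of that recursion exceeds [mu], which propagates the bounds
   (ii) downwards.  Beyond [c - 1] the level-1 probabilities solve a second-order
   linear recursion with characteristic roots [/ zh1], [/ z1] and a forcing term
   proportional to [(/ zh0)^n]; the boundary relation eliminates the growing
   component [(/ z1)^n] and fixes the constants, and summing two geometric
   series gives (iii). *)

Lemma pow_n_RtoC_mult (r : R) (z : C) (k : nat) :
  pow_n (RtoC r * z)%C k = (RtoC (r ^ k) * pow_n z k)%C.
Proof.
  change (Cpow (RtoC r * z) k = RtoC (r ^ k) * Cpow z k)%C.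
  induction k as [|k IH]; simpl.
  - ring.
  - rewrite IH, RtoC_mult. ring.
Qed.

Lemma is_series_geom_C (q : C) :
  Cmod q < 1 -> is_series (pow_n q) (/ (1 - q))%C.
Proof.
  intros Hq.
  assert (Hex : ex_series (pow_n q)).
  { apply (@ex_series_le C_AbsRing C_CompleteNormedModule _ (fun n => Cmod q ^ n)).
    - intros n. change (Cmod (Cpow q n) <= Cmod q ^ n). rewrite Cmod_pow. lra.
    - apply ex_series_geom. rewrite Rabs_pos_eq by apply Cmod_ge_0. exact Hq. }
  destruct Hex as [l Hl]. change C in l.
  assert (Hl' : is_series (pow_n q) (q * l + 1)%C).
  { apply is_series_decr_1.
    match goal with |- is_series _ ?x => replace x with (scal q l) end.
    - exact (is_series_scal q _ _ Hl).
    - change (q * l = q * l + 1 + - RtoC 1)%C. ring. }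
  assert (E : l = (q * l + 1)%C) by exact (filterlim_locally_unique _ _ _ Hl Hl').
  assert (Hq1 : (1 - q)%C <> 0%C).
  { intros E1. assert (q = 1%C) by (rewrite <- (Cplus_0_l q), <- E1; ring).
    subst q. rewrite Cmod_1 in Hq. lra. }
  replace (/ (1 - q))%C with l; [exact Hl|].
  field_simplify_eq; [|exact Hq1].
  transitivity (l - q * l)%C; [ring|]. rewrite E at 1. ring.
Qed.

Lemma is_series_inv_sub (h : R) (z : C) :
  Cmod z < Rabs h ->
  is_series (fun k => RtoC ((/ h) ^ S k) * pow_n z k)%C (/ (RtoC h - z))%C.
Proof.
  intros Hz.
  assert (Hz0 := Cmod_ge_0 z).
  assert (Hh : h <> 0) by (intros ->; rewrite Rabs_R0 in Hz; lra).
  assert (Hhz : (RtoC h - z)%C <> 0%C).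
  { intros E. assert (z = RtoC h) by (rewrite <- (Cplus_0_l z), <- E; ring).
    subst z. rewrite Cmod_R in Hz. lra. }
  assert (Hq : Cmod (RtoC (/ h) * z) < 1).
  { rewrite Cmod_mult, Cmod_R, Rabs_inv.
    apply (Rmult_lt_reg_l (Rabs h)); [apply Rabs_pos_lt; exact Hh|].
    rewrite <- Rmult_assoc, Rinv_r, Rmult_1_l, Rmult_1_r by (apply Rabs_no_R0; exact Hh).
    exact Hz. }
  replace (/ (RtoC h - z))%C with (RtoC (/ h) * / (1 - RtoC (/ h) * z))%C.
  - eapply is_series_ext; [|exact (is_series_scal _ _ _ (is_series_geom_C _ Hq))].
    intros k. simpl. change (scal ?a ?b) with (Cmult a b).
    rewrite pow_n_RtoC_mult, RtoC_mult. ring.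
  - rewrite RtoC_inv by exact Hh. field.
    split; [exact Hhz | intros E; apply Hh; exact (f_equal fst E)].
Qed.

Lemma linear_rec2_eq (a0 a1 a2 : R) (g u v : nat -> R) : a2 <> 0 ->
  (forall n, a2 * u (S (S n)) = a1 * u (S n) + a0 * u n + g n) ->
  (forall n, a2 * v (S (S n)) = a1 * v (S n) + a0 * v n + g n) ->
  u 0%nat = v 0%nat -> u 1%nat = v 1%nat -> forall n, u n = v n.
Proof.
  intros Ha2 Hu Hv H0 H1.
  assert (Hpair : forall n, u n = v n /\ u (S n) = v (S n)).
  { induction n as [|n [IH0 IH1]]; [split; assumption|split; [exact IH1|]].
    apply (Rmult_eq_reg_l a2); [|exact Ha2]. rewrite Hu, Hv, IH0, IH1. reflexivity. }
  intros n. apply Hpair.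
Qed.

Ltac decide_nat_tests :=
  repeat match goal with
  | |- context [Nat.eqb ?a ?b] => destruct (Nat.eqb_spec a b); try (exfalso; lia)
  | |- context [Nat.ltb ?a ?b] => destruct (Nat.ltb_spec a b); try (exfalso; lia)
  | |- context [Nat.leb ?a ?b] => destruct (Nat.leb_spec a b); try (exfalso; lia)
  end.

Ltac expand_balance H :=
  cbv [out_cands in_cands sumR rate inS List.map List.fold_right fst snd] in H;
  rewrite ?Nat.sub_0_r in H;
  revert H; decide_nat_tests; cbv [andb]; intros H.

Lemma inS_intro (c i j : nat) : (i <= c)%nat -> (i <= j)%nat -> inS c (i, j) = true.
Proof. intros. unfold inS; apply andb_true_intro; split; apply Nat.leb_le; simpl; lia. Qed.

Lemma rate_nonneg (c : nat) (lam mu alpha : R) (s t : nat * nat) :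
  0 <= lam -> 0 <= mu -> 0 <= alpha -> 0 <= rate c lam mu alpha s t.
Proof.
  intros. destruct s as [i j], t as [i' j']. cbv [rate].
  repeat match goal with |- context [if ?b then _ else _] => destruct b end;
  repeat apply Rplus_le_le_0_compat; try lra;
  apply Rmult_le_pos; try apply pos_INR; lra.
Qed.

Section Roots.
Variables (c : nat) (lam mu alpha : R).
Hypotheses (Hc : (2 <= c)%nat) (Hlam : 0 < lam) (Hmu : 0 < mu) (Halpha : 0 < alpha).

Lemma lam_mu_lt_Bq : lam + mu < Bq c lam mu alpha.
Proof. assert (2 <= INR c) by (apply (le_INR 2); exact Hc). unfold Bq. nra. Qed.

Lemma sqrt_discriminant_spec :
  0 <= sqrt (Bq c lam mu alpha ^ 2 - 4 * lam * mu) < Bq c lam mu alpha /\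
  sqrt (Bq c lam mu alpha ^ 2 - 4 * lam * mu) ^ 2 = Bq c lam mu alpha ^ 2 - 4 * lam * mu.
Proof.
  pose proof lam_mu_lt_Bq as HB. set (B := Bq c lam mu alpha) in *.
  assert (HD : 0 < B ^ 2 - 4 * lam * mu)
    by (pose proof (pow2_ge_0 (lam - mu)); nra).
  assert (Hs2 : sqrt (B ^ 2 - 4 * lam * mu) ^ 2 = B ^ 2 - 4 * lam * mu)
    by (rewrite <- Rsqr_pow2; apply Rsqr_sqrt; lra).
  pose proof (sqrt_pos (B ^ 2 - 4 * lam * mu)).
  repeat split; [assumption| |exact Hs2]. nra.
Qed.

Lemma f1_factor (x : R) :
  f1 c lam mu alpha x = - lam * (x - z1 c lam mu alpha) * (x - zh1 c lam mu alpha).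
Proof.
  destruct sqrt_discriminant_spec as [_ Hs2].
  unfold f1, z1, zh1. set (B := Bq c lam mu alpha) in *.
  set (s := sqrt (B ^ 2 - 4 * lam * mu)) in *.
  replace mu with ((B ^ 2 - s ^ 2) / (4 * lam)) at 1 by (rewrite Hs2; field; lra).
  field. lra.
Qed.

Lemma z1_zh1_bounds : 0 < z1 c lam mu alpha /\ z1 c lam mu alpha < 1 /\ 1 < zh1 c lam mu alpha.
Proof.
  destruct sqrt_discriminant_spec as [[Hs0 HsB] _].
  assert (Hz1 : 0 < z1 c lam mu alpha) by (apply Rdiv_lt_0_compat; lra).
  assert (Hle : z1 c lam mu alpha <= zh1 c lam mu alpha).
  { unfold z1, zh1. apply Rmult_le_compat_r; [apply Rlt_le, Rinv_0_lt_compat|]; lra. }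
  assert (H1 : 0 < f1 c lam mu alpha 1) by (pose proof lam_mu_lt_Bq; unfold f1; lra).
  rewrite f1_factor in H1.
  assert (Hneg : (1 - z1 c lam mu alpha) * (1 - zh1 c lam mu alpha) < 0).
  { apply (Rmult_lt_reg_l lam); [exact Hlam|]. lra. }
  split; [exact Hz1|]. split; nra.
Qed.

Lemma f1_z1 : f1 c lam mu alpha (z1 c lam mu alpha) = 0.
Proof. rewrite f1_factor. ring. Qed.

Lemma f1_zh1 : f1 c lam mu alpha (zh1 c lam mu alpha) = 0.
Proof. rewrite f1_factor. ring. Qed.

Lemma z1_zh1_prod : lam * z1 c lam mu alpha * zh1 c lam mu alpha = mu.
Proof. pose proof (f1_factor 0) as E. unfold f1 in E. nra. Qed.

Lemma inv_zh1_root :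
  mu * (/ zh1 c lam mu alpha) ^ 2 - Bq c lam mu alpha * / zh1 c lam mu alpha + lam = 0.
Proof.
  destruct z1_zh1_bounds as [_ [_ Hh1]].
  replace 0 with (- f1 c lam mu alpha (zh1 c lam mu alpha) / zh1 c lam mu alpha ^ 2)
    by (rewrite f1_zh1; field; lra).
  unfold f1. field. lra.
Qed.

End Roots.

Lemma a1_b1_top (c : nat) (lam mu alpha : R) (pi : nat * nat -> R) :
  a1 c lam mu alpha pi c =
    INR c * alpha * Pi0hat c pi (z1 c lam mu alpha) / (mu * z1 c lam mu alpha ^ (c - 1)) /\
  b1 c lam mu alpha pi c = lam * z1 c lam mu alpha / mu.
Proof. unfold a1, b1. rewrite Nat.sub_diag. split; reflexivity. Qed.

Lemma a1_b1_step (c : nat) (lam mu alpha : R) (pi : nat * nat -> R) (j : nat) : (j < c)%nat ->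
  let d := lam + mu + (INR j - 1) * alpha - mu * b1 c lam mu alpha pi (S j) in
  a1 c lam mu alpha pi j = (INR j * alpha * pi (0, j)%nat + mu * a1 c lam mu alpha pi (S j)) / d /\
  b1 c lam mu alpha pi j = lam / d.
Proof.
  intros Hj d. unfold d, a1, b1. replace (c - j)%nat with (S (c - S j)) by lia. cbn [ab].
  destruct (ab c lam mu alpha pi (c - S j)) as [a' b']. cbn [fst snd].
  replace (c - S (c - S j))%nat with j by lia. split; reflexivity.
Qed.

Section Chain.
Variables (c : nat) (lam mu alpha : R) (pi : nat * nat -> R).
Hypotheses (Hlam : 0 < lam) (Hmu : 0 < mu) (Halpha : 0 < alpha).
Hypothesis Hst : stationary c lam mu alpha pi.

Lemma pi_nonneg (i j : nat) : (i <= c)%nat -> (i <= j)%nat -> 0 <= pi (i, j).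
Proof. intros. apply Hst, inS_intro; assumption. Qed.

Lemma pi_eq0_backward (s t : nat * nat) :
  inS c s = true -> pi s = 0 -> List.In t (in_cands s) ->
  0 < rate c lam mu alpha t s -> pi t = 0.
Proof.
  intros Hs Hs0 Ht Hrate. destruct Hst as [Hnn [_ [_ Hb]]].
  assert (Hterm : forall u, 0 <= pi u * rate c lam mu alpha u s).
  { intros u. destruct (inS c u) eqn:Hu.
    - apply Rmult_le_pos; [exact (Hnn u Hu)|apply rate_nonneg; lra].
    - destruct u, s. cbv [rate]. rewrite Hu. cbn [andb]. lra. }
  specialize (Hb s Hs). rewrite Hs0, Rmult_0_l in Hb.
  assert (Hzero : pi t * rate c lam mu alpha t s = 0).
  { destruct s as [i j]. cbv [in_cands sumR List.map List.fold_right] in Hb, Ht.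
    pose proof (Hterm (i, j - 1)%nat). pose proof (Hterm (i - 1, j)%nat).
    pose proof (Hterm (i, j + 1)%nat). pose proof (Hterm (i + 1, j + 1)%nat).
    destruct Ht as [<-|[<-|[<-|[<-|[]]]]]; lra. }
  apply Rmult_integral in Hzero. destruct Hzero; [assumption|lra].
Qed.

Section Level0.
Hypothesis Hc : (1 <= c)%nat.

Lemma balance_level0 (j : nat) :
  pi (0, S j)%nat * (lam + INR (Nat.min (S j) c) * alpha) = lam * pi (0, j)%nat.
Proof.
  destruct Hst as [_ [_ [_ Hb]]].
  specialize (Hb (0, S j)%nat eq_refl). cbv [out_cands in_cands] in Hb.
  replace (S j - 1)%nat with j in Hb by lia.
  expand_balance Hb; lra.
Qed.

Lemma pi_00_pos : 0 < pi (0, 0)%nat.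
Proof.
  (* Zero mass at a state forces zero mass on every state feeding it; from (0,0)
     this spreads over all of S, contradicting total mass 1. *)
  destruct (Rle_lt_or_eq_dec _ _ (pi_nonneg 0 0 (Nat.le_0_l c) (le_n 0))) as [|H00];
    [assumption|exfalso]. symmetry in H00.
  assert (Hdiag : forall i, (i <= c)%nat -> pi (i, i) = 0).
  { induction i as [|i IH]; intros Hi; [exact H00|].
    apply (pi_eq0_backward (i, i)); [apply inS_intro; lia | apply IH; lia | |].
    - simpl. right; right; right; left. f_equal; lia.
    - assert (0 <= INR i) by apply pos_INR.
      cbv [rate inS fst snd]. decide_nat_tests; cbv [andb]; rewrite ?S_INR; nra. }
  assert (Hrow : forall i k, (1 <= i <= c)%nat -> pi (i, i + k)%nat = 0).
  { intros i k Hi. induction k as [|k IH]; [rewrite Nat.add_0_r; apply Hdiag; lia|].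
    apply (pi_eq0_backward (i, i + k)%nat); [apply inS_intro; lia | exact IH | |].
    - simpl. right; right; left. f_equal; lia.
    - assert (1 <= INR i) by (apply (le_INR 1); lia).
      cbv [rate inS fst snd]. decide_nat_tests; cbv [andb]; nra. }
  assert (Hrow0 : forall k, pi (0, k)%nat = 0).
  { intros [|k]; [exact H00|].
    apply (pi_eq0_backward (1, S k)%nat); [apply inS_intro; lia | apply (Hrow 1%nat k); lia | |].
    - simpl. right; left. f_equal; lia.
    - assert (0 < INR (Nat.min (S k) c)) by (apply lt_0_INR; lia).
      cbv [rate inS fst snd]. decide_nat_tests; cbv [andb]; rewrite ?Nat.sub_0_r; nra. }
  destruct Hst as [_ [_ [Hsum _]]].
  rewrite (sum_n_ext_loc _ (fun _ => 0)), sum_n_const in Hsum; [lra|].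
  intros i Hi. rewrite (Series_ext _ (fun _ => 0 * 0)).
  - rewrite Series_scal_l. apply Rmult_0_l.
  - intros k. destruct i; [rewrite Hrow0|rewrite Hrow by lia]; symmetry; apply Rmult_0_l.
Qed.

Lemma pi_level0_pos (j : nat) : 0 < pi (0, j)%nat.
Proof.
  induction j as [|j IH]; [exact pi_00_pos|].
  pose proof (balance_level0 j) as Hb. pose proof (pos_INR (Nat.min (S j) c)).
  assert (0 < lam + INR (Nat.min (S j) c) * alpha) by nra.
  nra.
Qed.

Lemma inv_zh0 : / zh0 c lam alpha = lam / (lam + INR c * alpha).
Proof. apply Rinv_div. Qed.

Lemma zh0_gt_1 : 1 < zh0 c lam alpha.
Proof.
  assert (1 <= INR c) by (apply (le_INR 1); exact Hc).
  unfold zh0. apply Rlt_div_r; [exact Hlam|]. nra.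
Qed.

Lemma pi_level0_geom (n : nat) :
  pi (0, c - 1 + n)%nat = pi (0, c - 1)%nat * (/ zh0 c lam alpha) ^ n.
Proof.
  induction n as [|n IH]; [rewrite Nat.add_0_r; ring|].
  pose proof (balance_level0 (c - 1 + n)) as Hb.
  replace (Nat.min (S (c - 1 + n)) c) with c in Hb by lia.
  replace (c - 1 + S n)%nat with (S (c - 1 + n)) by lia.
  assert (0 < lam + INR c * alpha) by (pose proof (pos_INR c); nra).
  transitivity (/ zh0 c lam alpha * pi (0, c - 1 + n)%nat).
  - rewrite inv_zh0. apply (Rmult_eq_reg_r (lam + INR c * alpha)); [|lra].
    rewrite Hb. field. lra.
  - rewrite IH, <- tech_pow_Rmult. ring.
Qed.

Lemma is_series_Pi0hat (z : R) : Rabs z < zh0 c lam alpha ->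
  is_series (fun k => pi (0, c + k)%nat * z ^ (c + k))
    (pi (0, c - 1)%nat * z ^ c / (zh0 c lam alpha - z)).
Proof.
  intros Hz. pose proof zh0_gt_1 as Hh.
  assert (Hzh : z < zh0 c lam alpha) by (pose proof (Rle_abs z); lra).
  set (r := / zh0 c lam alpha).
  assert (Hr : 0 < r) by (apply Rinv_0_lt_compat; lra).
  assert (Hrz : Rabs (r * z) < 1).
  { rewrite Rabs_mult, (Rabs_pos_eq r) by lra. unfold r.
    apply (Rmult_lt_reg_l (zh0 c lam alpha)); [lra|].
    rewrite <- Rmult_assoc, Rinv_r, Rmult_1_l, Rmult_1_r; lra. }
  replace (pi (0, c - 1)%nat * z ^ c / (zh0 c lam alpha - z))
    with (pi (0, c - 1)%nat * r * z ^ c * / (1 - r * z)) by (unfold r; field; split; lra).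
  eapply is_series_ext; [|exact (is_series_scal_l _ _ _ (is_series_geom _ Hrz))].
  intros k. change (scal ?a ?b) with (a * b).
  replace (c + k)%nat with (c - 1 + S k)%nat by lia. rewrite pi_level0_geom.
  replace (c - 1 + S k)%nat with (c + k)%nat by lia.
  rewrite pow_add, Rpow_mult_distr. fold r. simpl. ring.
Qed.

Lemma Pi0hat_eq (z : R) : Rabs z < zh0 c lam alpha ->
  Pi0hat c pi z = pi (0, c - 1)%nat * z ^ c / (zh0 c lam alpha - z).
Proof. intros Hz. apply is_series_unique, is_series_Pi0hat, Hz. Qed.

End Level0.

Section Level1.
Hypothesis Hc : (2 <= c)%nat.

Lemma balance_level1 (j : nat) : (2 <= j)%nat ->
  pi (1, j)%nat * (lam + INR (Nat.min (j - 1) (c - 1)) * alpha + mu) =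
  lam * pi (1, j - 1)%nat + INR (Nat.min j c) * alpha * pi (0, j)%nat
  + mu * pi (1, S j)%nat.
Proof.
  intros Hj. destruct Hst as [_ [_ [_ Hb]]].
  specialize (Hb (1, j)%nat (inS_intro c 1 j ltac:(lia) ltac:(lia))).
  cbv [out_cands in_cands] in Hb. cbn [Nat.sub Nat.add] in Hb.
  replace (j + 1)%nat with (S j) in Hb by lia.
  expand_balance Hb; simpl INR in Hb; lra.
Qed.

Lemma balance_level1_head (j : nat) : (2 <= j <= c)%nat ->
  pi (1, j)%nat * (lam + mu + (INR j - 1) * alpha) =
  lam * pi (1, j - 1)%nat + INR j * alpha * pi (0, j)%nat + mu * pi (1, S j)%nat.
Proof.
  intros Hj. pose proof (balance_level1 j ltac:(lia)) as Hb.
  replace (Nat.min (j - 1) (c - 1)) with (j - 1)%nat in Hb by lia.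
  replace (Nat.min j c) with j in Hb by lia.
  rewrite minus_INR in Hb by lia. simpl INR in Hb. lra.
Qed.

Lemma balance_level1_tail (n : nat) :
  mu * pi (1, S (c + n))%nat =
  Bq c lam mu alpha * pi (1, c + n)%nat - lam * pi (1, c - 1 + n)%nat
  - INR c * alpha * pi (0, c + n)%nat.
Proof.
  pose proof (balance_level1 (c + n) ltac:(lia)) as Hb.
  replace (Nat.min (c + n - 1) (c - 1)) with (c - 1)%nat in Hb by lia.
  replace (Nat.min (c + n) c) with c in Hb by lia.
  replace (c + n - 1)%nat with (c - 1 + n)%nat in Hb by lia.
  rewrite minus_INR in Hb by lia. simpl INR in Hb. unfold Bq. lra.
Qed.

(* For a root [z] of [f1] the level-1 balance equations beyond [c] telescope in this quantity. *)
Definition level1_flux (z : R) (n : nat) : R :=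
  mu * z ^ (c - 1 + n) * pi (1, c + n)%nat - lam * z ^ (c + n) * pi (1, c - 1 + n)%nat.

Lemma level1_flux_succ (z : R) : f1 c lam mu alpha z = 0 -> forall n,
  level1_flux z (S n) = level1_flux z n - INR c * alpha * (pi (0, c + n)%nat * z ^ (c + n)).
Proof.
  intros Hz n. unfold level1_flux.
  replace (c - 1 + S n)%nat with (c + n)%nat by lia.
  replace (c + S n)%nat with (S (c + n)) by lia.
  assert (Hpow : z ^ (c + n) = z * z ^ (c - 1 + n))
    by (replace (c + n)%nat with (S (c - 1 + n)) by lia; reflexivity).
  cbn [pow]. rewrite Hpow. set (w := z ^ (c - 1 + n)).
  assert (Hrec := balance_level1_tail n). unfold f1 in Hz.
  set (B := Bq c lam mu alpha) in *.
  transitivity (z * w * (mu * pi (1, S (c + n))%nat - (B * pi (1, c + n)%nat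
      - lam * pi (1, c - 1 + n)%nat - INR c * alpha * pi (0, c + n)%nat))
    + (mu * w * pi (1, c + n)%nat - lam * (z * w) * pi (1, c - 1 + n)%nat
      - INR c * alpha * (pi (0, c + n)%nat * (z * w)))
    + w * pi (1, c + n)%nat * (B * z - lam * z ^ 2 - mu)).
  - ring.
  - rewrite Hrec, Hz. ring.
Qed.

Lemma level1_flux_lim (z : R) : Rabs z < 1 -> is_lim_seq (level1_flux z) 0.
Proof.
  intros Hz.
  assert (Hgeo : forall N, is_lim_seq (fun n => z ^ (N + n)) 0).
  { intros N. apply (is_lim_seq_ext (fun n => z ^ (n + N))); [intros n; f_equal; lia|].
    apply (is_lim_seq_incr_n (fun n => z ^ n) N), is_lim_seq_geom, Hz. }
  assert (Hpi : forall N, (1 <= N)%nat -> is_lim_seq (fun n => pi (1, N + n)%nat) 0).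
  { intros N HN. destruct Hst as [_ [Hex _]].
    pose proof (ex_series_lim_0 _ (Hex 1%nat ltac:(lia))) as H0.
    apply (is_lim_seq_incr_n _ (N - 1)) in H0.
    eapply is_lim_seq_ext; [|exact H0]. intros n. cbv beta.
    replace (N + n)%nat with (1 + (n + (N - 1)))%nat by lia. reflexivity. }
  pose proof (is_lim_seq_minus' _ _ _ _
    (is_lim_seq_scal_l _ mu _ (is_lim_seq_mult' _ _ _ _ (Hgeo (c - 1)%nat) (Hpi c ltac:(lia))))
    (is_lim_seq_scal_l _ lam _ (is_lim_seq_mult' _ _ _ _ (Hgeo c) (Hpi (c - 1)%nat ltac:(lia)))))
    as Hlim.
  simpl in Hlim. replace (mu * (0 * 0) - lam * (0 * 0)) with 0 in Hlim by ring.
  eapply is_lim_seq_ext; [|exact Hlim]. intros n. unfold level1_flux. ring.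
Qed.

(* The flux vanishes at infinity, so its value at the boundary is the total inflow from level 0. *)
Lemma level1_flux_0 (z : R) : f1 c lam mu alpha z = 0 -> Rabs z < 1 ->
  level1_flux z 0 = INR c * alpha * Pi0hat c pi z.
Proof.
  intros Hf Hz. assert (Hc1 : (1 <= c)%nat) by lia.
  set (a := fun k => pi (0, c + k)%nat * z ^ (c + k)).
  assert (Ha : is_series a (Pi0hat c pi z)).
  { pose proof (zh0_gt_1 Hc1). rewrite (Pi0hat_eq Hc1) by lra.
    apply (is_series_Pi0hat Hc1). lra. }
  assert (Hsum : forall n, level1_flux z (S n) = level1_flux z 0 - INR c * alpha * sum_n a n).
  { induction n as [|n IH].
    - rewrite level1_flux_succ, sum_O by exact Hf. reflexivity.
    - rewrite level1_flux_succ, IH, sum_Sn by exact Hf. unfold plus, a. simpl. lra. }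
  assert (Hlim : is_lim_seq (fun n => level1_flux z (S n))
                   (level1_flux z 0 - INR c * alpha * Pi0hat c pi z)).
  { eapply is_lim_seq_ext; [intros n; symmetry; apply Hsum|].
    apply is_lim_seq_minus'; [apply is_lim_seq_const|].
    apply (is_lim_seq_scal_l _ (INR c * alpha) (Pi0hat c pi z)). exact Ha. }
  apply is_lim_seq_unique in Hlim.
  rewrite (is_lim_seq_unique _ _ (proj1 (is_lim_seq_incr_1 _ _) (level1_flux_lim z Hz))) in Hlim.
  injection Hlim. lra.
Qed.

Lemma level1_boundary_z1 :
  mu * z1 c lam mu alpha ^ (c - 1) * pi (1, c)%nat
  - lam * z1 c lam mu alpha ^ c * pi (1, c - 1)%nat
  = INR c * alpha * Pi0hat c pi (z1 c lam mu alpha).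
Proof.
  destruct (z1_zh1_bounds c lam mu alpha Hc Hlam Hmu Halpha) as [Hz1 [Hz1' _]].
  rewrite <- (level1_flux_0 _ (f1_z1 c lam mu alpha Hc Hlam Hmu Halpha))
    by (rewrite Rabs_pos_eq; lra).
  unfold level1_flux. rewrite !Nat.add_0_r. reflexivity.
Qed.

Lemma ab1_bounds (j : nat) : (1 <= j <= c)%nat ->
  0 < a1 c lam mu alpha pi j /\ 0 < b1 c lam mu alpha pi j < lam / mu.
Proof.
  intros Hj. assert (Hc1 : (1 <= c)%nat) by lia.
  destruct (z1_zh1_bounds c lam mu alpha Hc Hlam Hmu Halpha) as [Hz1 [Hz1' _]].
  remember (c - j)%nat as k eqn:Hk. revert j Hj Hk.
  induction k as [|k IH]; intros j Hj Hk.
  - replace j with c by lia. destruct (a1_b1_top c lam mu alpha pi) as [-> ->].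
    pose proof (zh0_gt_1 Hc1). pose proof (pi_level0_pos Hc1 (c - 1)).
    pose proof (pow_lt _ c Hz1). pose proof (pow_lt _ (c - 1) Hz1).
    assert (0 < INR c) by (apply lt_0_INR; lia).
    rewrite (Pi0hat_eq Hc1) by (rewrite Rabs_pos_eq; lra).
    assert (HPi : 0 < pi (0, c - 1)%nat * z1 c lam mu alpha ^ c
                      / (zh0 c lam alpha - z1 c lam mu alpha))
      by (apply Rdiv_lt_0_compat; nra).
    repeat split.
    + apply Rdiv_lt_0_compat; [apply Rmult_lt_0_compat; [nra|exact HPi]|nra].
    + apply Rdiv_lt_0_compat; nra.
    + apply Rmult_lt_compat_r; [apply Rinv_0_lt_compat|]; nra.
  - destruct (IH (S j) ltac:(lia) ltac:(lia)) as [Ha' [_ Hb']].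
    destruct (a1_b1_step c lam mu alpha pi j ltac:(lia)) as [-> ->].
    apply Rlt_div_r in Hb'; [|lra].
    assert (1 <= INR j) by (apply (le_INR 1); lia).
    assert (Hd : mu < lam + mu + (INR j - 1) * alpha - mu * b1 c lam mu alpha pi (S j)) by nra.
    assert (0 <= INR j * alpha * pi (0, j)%nat).
    { pose proof (pi_nonneg 0 j ltac:(lia) ltac:(lia)).
      apply Rmult_le_pos; [apply Rmult_le_pos|]; lra. }
    repeat split.
    + apply Rdiv_lt_0_compat; nra.
    + apply Rdiv_lt_0_compat; lra.
    + apply Rmult_lt_compat_l; [lra|]. apply Rinv_lt_contravar; nra.
Qed.

Lemma pi1_ab1_recursion (j : nat) : (2 <= j <= c)%nat ->
  pi (1, j)%nat = a1 c lam mu alpha pi j + b1 c lam mu alpha pi j * pi (1, j - 1)%nat.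
Proof.
  intros Hj.
  destruct (z1_zh1_bounds c lam mu alpha Hc Hlam Hmu Halpha) as [Hz1 [Hz1' _]].
  remember (c - j)%nat as k eqn:Hk. revert j Hj Hk.
  induction k as [|k IH]; intros j Hj Hk.
  - replace j with c by lia. destruct (a1_b1_top c lam mu alpha pi) as [-> ->].
    rewrite <- level1_boundary_z1. set (z := z1 c lam mu alpha) in *.
    assert (Hpow : z ^ c = z * z ^ (c - 1))
      by (replace c with (S (c - 1)) at 1 by lia; reflexivity).
    pose proof (pow_lt _ (c - 1) Hz1). rewrite Hpow. field. lra.
  - destruct (ab1_bounds (S j) ltac:(lia)) as [_ [_ Hb']]. apply Rlt_div_r in Hb'; [|lra].
    destruct (a1_b1_step c lam mu alpha pi j ltac:(lia)) as [-> ->].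
    pose proof (IH (S j) ltac:(lia) ltac:(lia)) as Hnext. cbn [Nat.sub] in Hnext.
    rewrite Nat.sub_0_r in Hnext.
    pose proof (balance_level1_head j ltac:(lia)) as Hb.
    assert (1 <= INR j) by (apply (le_INR 1); lia).
    set (d := lam + mu + (INR j - 1) * alpha - mu * b1 c lam mu alpha pi (S j)).
    assert (Hd : mu < d) by (unfold d; nra).
    apply (Rmult_eq_reg_r d); [|lra].
    transitivity (INR j * alpha * pi (0, j)%nat + mu * a1 c lam mu alpha pi (S j)
                  + lam * pi (1, j - 1)%nat).
    + unfold d. rewrite Hnext in Hb. lra.
    + field. lra.
Qed.

Section Distinct_roots.
Hypothesis Hne : zh0 c lam alpha <> zh1 c lam mu alpha.

Lemma f1_zh0_neq0 : f1 c lam mu alpha (zh0 c lam alpha) <> 0.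
Proof.
  destruct (z1_zh1_bounds c lam mu alpha Hc Hlam Hmu Halpha) as [_ [Hz1 _]].
  pose proof (zh0_gt_1 ltac:(lia)).
  rewrite f1_factor by assumption. intros E.
  apply Rmult_integral in E as [E|E]; [apply Rmult_integral in E as [E|E]|]; lra.
Qed.

(* [A10 (/ zh0)^n] is a particular solution of the inhomogeneous tail recursion. *)
Lemma A10_particular :
  A10 c lam mu alpha pi
    * (mu * (/ zh0 c lam alpha) ^ 2 - Bq c lam mu alpha * / zh0 c lam alpha + lam)
  + INR c * alpha * pi (0, c - 1)%nat * / zh0 c lam alpha = 0.
Proof.
  pose proof f1_zh0_neq0 as Hf0. pose proof (zh0_gt_1 ltac:(lia)).
  unfold A10. unfold f1 in *. field. split; [lra|]. intros E. apply Hf0. lra.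
Qed.

Lemma pi1_c_closed_form :
  pi (1, c)%nat = A10 c lam mu alpha pi * / zh0 c lam alpha
                  + A11 c lam mu alpha pi * / zh1 c lam mu alpha.
Proof.
  destruct (z1_zh1_bounds c lam mu alpha Hc Hlam Hmu Halpha) as [Hz [Hz' Hh1]].
  pose proof (zh0_gt_1 ltac:(lia)) as Hh0.
  pose proof level1_boundary_z1 as Hflux.
  pose proof (z1_zh1_prod c lam mu alpha Hc Hlam Hmu Halpha) as Hprod.
  rewrite (Pi0hat_eq ltac:(lia)) in Hflux by (rewrite Rabs_pos_eq; lra).
  unfold A11, A10. rewrite f1_factor by assumption.
  set (z := z1 c lam mu alpha) in *. set (h0 := zh0 c lam alpha) in *.
  set (h1 := zh1 c lam mu alpha) in *.
  pose proof (pow_lt z (c - 1) Hz) as Hw. set (w := z ^ (c - 1)) in *.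
  assert (Hpow : z ^ c = z * w) by (replace c with (S (c - 1)) at 1 by lia; reflexivity).
  rewrite Hpow in Hflux.
  assert (Hpc : pi (1, c)%nat = (lam * (z * w) * pi (1, c - 1)%nat
      + INR c * alpha * (pi (0, c - 1)%nat * (z * w) / (h0 - z))) / (mu * w)).
  { rewrite <- Hflux. field. split; lra. }
  rewrite Hpc, <- Hprod. field. repeat split; lra.
Qed.

Lemma pi1_closed_form (n : nat) :
  pi (1, c - 1 + n)%nat =
  A10 c lam mu alpha pi * (/ zh0 c lam alpha) ^ n
  + A11 c lam mu alpha pi * (/ zh1 c lam mu alpha) ^ n.
Proof.
  pose proof (inv_zh1_root c lam mu alpha Hc Hlam Hmu Halpha) as Hq1.
  pose proof A10_particular as Hq0.
  unfold A11 in *. set (A := A10 c lam mu alpha pi) in *.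
  set (r0 := / zh0 c lam alpha) in *. set (r1 := / zh1 c lam mu alpha) in *.
  set (B := Bq c lam mu alpha) in *. set (P := pi (0, c - 1)%nat) in *.
  revert n.
  apply (linear_rec2_eq (- lam) B mu (fun n => - (INR c * alpha * P * r0 ^ S n))); [lra|..].
  - intros n. replace (c - 1 + S (S n))%nat with (S (c + n)) by lia.
    replace (c - 1 + S n)%nat with (c + n)%nat by lia.
    rewrite balance_level1_tail.
    replace (c + n)%nat with (c - 1 + S n)%nat at 2 by lia.
    rewrite (pi_level0_geom ltac:(lia)). fold P r0 B. ring.
  - intros n. apply Rminus_diag_uniq. cbn [pow].
    transitivity (r0 ^ n * (A * (mu * r0 ^ 2 - B * r0 + lam) + INR c * alpha * P * r0)
                  + (pi (1, c - 1)%nat - A) * r1 ^ n * (mu * r1 ^ 2 - B * r1 + lam)).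
    + ring.
    + rewrite Hq0, Hq1. ring.
  - rewrite Nat.add_0_r. ring.
  - replace (c - 1 + 1)%nat with c by lia.
    rewrite pi1_c_closed_form. unfold A11. fold A r0 r1. ring.
Qed.

Lemma is_series_Pi1hat (z : C) : Cmod z <= 1 ->
  is_series (fun k => (RtoC (pi (1, c + k)%nat) * pow_n z (c + k - 1))%C)
    (pow_n z (c - 1) *
       (RtoC (A10 c lam mu alpha pi) / (RtoC (zh0 c lam alpha) - z)
        + RtoC (A11 c lam mu alpha pi) / (RtoC (zh1 c lam mu alpha) - z)))%C.
Proof.
  intros Hz.
  destruct (z1_zh1_bounds c lam mu alpha Hc Hlam Hmu Halpha) as [_ [_ Hh1]].
  pose proof (zh0_gt_1 ltac:(lia)) as Hh0.
  assert (G : forall h, 1 < h ->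
    is_series (fun k => RtoC ((/ h) ^ S k) * pow_n z k)%C (/ (RtoC h - z))%C).
  { intros h Hh. apply is_series_inv_sub. rewrite Rabs_pos_eq; lra. }
  pose proof (is_series_scal (pow_n z (c - 1)) _ _
    (is_series_plus _ _ _ _
      (is_series_scal (RtoC (A10 c lam mu alpha pi)) _ _ (G _ Hh0))
      (is_series_scal (RtoC (A11 c lam mu alpha pi)) _ _ (G _ Hh1)))) as Hsum.
  eapply is_series_ext; [|exact Hsum].
  intros k. simpl.
  repeat change (scal ?a ?b) with (Cmult a b). change (plus ?a ?b) with (Cplus a b).
  replace (c + k - 1)%nat with (c - 1 + k)%nat by lia.
  replace (c + k)%nat with (c - 1 + S k)%nat by lia.
  rewrite pi1_closed_form, pow_n_plus. change (mult ?a ?b) with (Cmult a b).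
  cbn [pow]. rewrite RtoC_plus, !RtoC_mult. ring.
Qed.

End Distinct_roots.
End Level1.
End Chain.

Theorem lemma3p1 (c : nat) (lam mu alpha : R) (pi : nat * nat -> R) :
  (2 <= c)%nat -> 0 < lam -> 0 < mu -> 0 < alpha -> lam < INR c * mu ->
  stationary c lam mu alpha pi ->
  (* (i) *)
  (forall j : nat, (2 <= j <= c)%nat ->
     pi (1, j)%nat = a1 c lam mu alpha pi j + b1 c lam mu alpha pi j * pi (1, j - 1)%nat) /\
  (* (ii) *)
  (forall j : nat, (1 <= j <= c)%nat ->
     0 < a1 c lam mu alpha pi j /\
     0 < b1 c lam mu alpha pi j < lam / mu) /\
  (* (iii) *)
  (zh0 c lam alpha <> zh1 c lam mu alpha ->
   forall z : C, Cmod z <= 1 ->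
     is_series (fun k => (RtoC (pi (1, c + k)%nat) * pow_n z (c + k - 1))%C)
       (pow_n z (c - 1) *
          (RtoC (A10 c lam mu alpha pi) / (RtoC (zh0 c lam alpha) - z)
           + RtoC (A11 c lam mu alpha pi) / (RtoC (zh1 c lam mu alpha) - z)))%C).
Proof.
  (* [lam < c mu] only guarantees that a stationary distribution exists. *)
  intros Hc Hlam Hmu Halpha _ Hst.
  split; [|split].
  - intros j Hj. apply pi1_ab1_recursion; assumption.
  - intros j Hj. apply ab1_bounds; assumption.
  - intros Hne z Hz. apply is_series_Pi1hat; assumption.
Qed.
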